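(* Let $v$ be a vertex of a graph $\Gamma$ with incident edges $e_1,\dots,e_K$, and for each $i$ let $X_i$ be a nonsingular vector field defined on a neighborhood of the endpoint of $e_i$ at $v$, this neighborhood being identified with $[0,1)$ with $0$ corresponding to $v$. Suppose that (1) each $X_i$ generates a well-defined local semiflow on $(0,1)$; (2) the magnitudes $\|X_i(0)\|$ of the endpoint vectors (taken with respect to the attaching homeomorphisms) are all identical; and (3) among the signs of the endpoint vectors $X_i(0)$ (positive if pointing into $[0,\epsilon)$, negative if pointing out of it) there is exactly one positive sign. Then $\{X_i\}$ generates a well-defined semiflow on the union of these edge neighborhoods in $\Gamma$, i.e., every point has a unique forward orbit.
   Context: A graph consists of finitely many vertices and edges, each edge homeomorphic to $[0,1]$ and attached to vertices along its endpoints, with the quotient topology. A semiflow is a continuous-time dynamical system in which every point has a uniquely defined forward orbit (backward orbits need not be unique). *)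

From Stdlib Require Import Reals Lra Arith.
Open Scope R_scope.

Definition cont_on_time {A : Type} (dist : A -> A -> R)
  (g : R -> A) (T : R) : Prop :=
  forall t, 0 <= t < T -> forall eps, eps > 0 ->
    exists delta, delta > 0 /\
      forall s, 0 <= s < T -> Rabs (s - t) < delta -> dist (g s) (g t) < eps.

Definition right_deriv (f : R -> R) (t T L : R) : Prop :=
  forall eps, eps > 0 -> exists delta, delta > 0 /\
    forall s, t < s -> s < t + delta -> s < T ->
      Rabs ((f s - f t) / (s - t) - L) < eps.

Definition vf_continuous (X : R -> R) : Prop :=
  forall x, 0 <= x < 1 -> forall eps, eps > 0 -> exists delta, delta > 0 /\
    forall y, 0 <= y < 1 -> Rabs (y - x) < delta -> Rabs (X y - X x) < eps.

Definition nonsingular (X : R -> R) : Prop := forall x, 0 <= x < 1 -> X x <> 0.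

Definition open_edge_solution (X : R -> R) (x : R -> R) (T : R) : Prop :=
  T > 0 /\
  (forall t, 0 <= t < T -> 0 < x t < 1) /\
  cont_on_time (fun a b => Rabs (a - b)) x T /\
  (forall t, 0 <= t < T -> right_deriv x t T (X (x t))).

Definition local_semiflow_open (X : R -> R) : Prop :=
  (forall x0, 0 < x0 < 1 -> exists x T, open_edge_solution X x T /\ x 0 = x0) /\
  (forall x1 T1 x2 T2, open_edge_solution X x1 T1 -> open_edge_solution X x2 T2 ->
     x1 0 = x2 0 -> forall t, 0 <= t -> t < T1 -> t < T2 -> x1 t = x2 t).

(* A point is (i, x) with i < K and 0 <= x < 1 : coordinate x on edge i,
   x = 0 being the vertex v.  All (i,0) are identified (quotient topology). *)
Definition star_point (K : nat) (p : nat * R) : Prop :=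
  (fst p < K)%nat /\ 0 <= snd p < 1.

Definition star_eq (p q : nat * R) : Prop :=
  p = q \/ (snd p = 0 /\ snd q = 0).

(* path metric of the star (induces the quotient topology) *)
Definition star_dist (p q : nat * R) : R :=
  if Nat.eqb (fst p) (fst q) then Rabs (snd p - snd q) else snd p + snd q.

Definition on_edge (i : nat) (p : nat * R) : Prop := fst p = i \/ snd p = 0.

(* the coordinate of p along edge i (meaningful when on_edge i p) *)
Definition coord (i : nat) (p : nat * R) : R :=
  if Nat.eqb (fst p) i then snd p else 0.

Definition star_solution (K : nat) (X : nat -> R -> R) (g : R -> nat * R) (T : R)
  : Prop :=
  T > 0 /\
  (forall t, 0 <= t < T -> star_point K (g t)) /\
  cont_on_time star_dist g T /\
  (forall t, 0 <= t < T -> exists i, (i < K)%nat /\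
     (exists delta, delta > 0 /\
        forall s, t <= s -> s < t + delta -> s < T -> on_edge i (g s)) /\
     right_deriv (fun s => coord i (g s)) t T (X i (coord i (g t)))).

Definition star_semiflow (K : nat) (X : nat -> R -> R) : Prop :=
  (forall p, star_point K p ->
     exists g T, star_solution K X g T /\ star_eq (g 0) p) /\
  (forall g1 T1 g2 T2, star_solution K X g1 T1 -> star_solution K X g2 T2 ->
     star_eq (g1 0) (g2 0) ->
     forall t, 0 <= t -> t < T1 -> t < T2 -> star_eq (g1 t) (g2 t)).

From Stdlib Require Import Reals Ranalysis5 Lra Lia Classical ClassicalEpsilon.
From Coquelicot Require Import Coquelicot.
Open Scope R_scope.

(* On an edge with nonsingular field Y, the time function
   F(x) = \int_0^x du / Y(u) is injective, and F(x(t)) - t is constant along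
   any solution moving on that edge; so two solutions that agree at some time
   and move along the same edge keep agreeing.  A solution at the vertex has a
   nonnegative coordinate on the edge it leaves along, so the field there is
   X_i(0) > 0: by hypothesis (3) every solution leaves the vertex along the same
   edge, and real induction on time gives uniqueness.  Solutions from the vertex
   are obtained by inverting F on that inward edge; elsewhere hypothesis (1)
   provides them. *)

Lemma right_deriv_ext f h t T L :
  (forall s, f s = h s) -> right_deriv f t T L -> right_deriv h t T L.
Proof.
  intros E H eps He. destruct (H eps He) as [d [Hd Hq]].
  exists d; split; [exact Hd|]. intros s Hts Hsd HsT. rewrite <- !E. now apply Hq.
Qed.

Lemma right_deriv_restrict f t T T' L :
  T' <= T -> right_deriv f t T L -> right_deriv f t T' L.
Proof.
  intros HT H eps He. destruct (H eps He) as [d [Hd Hq]].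
  exists d; split; [exact Hd|]. intros s Hts Hsd HsT. apply Hq; lra.
Qed.

Lemma right_deriv_of_derivable f t T L :
  derivable_pt_lim f t L -> right_deriv f t T L.
Proof.
  intros H eps He. destruct (H eps He) as [d Hq].
  exists d; split; [apply cond_pos|]. intros s Hts Hsd _.
  replace s with (t + (s - t)) by ring.
  replace (t + (s - t) - t) with (s - t) by ring.
  apply Hq; [lra|]. rewrite Rabs_right; lra.
Qed.

Lemma right_deriv_sample f t T L eps eta :
  t < T -> right_deriv f t T L -> eps > 0 -> eta > 0 ->
  exists s, t < s < t + eta /\ s < T /\ Rabs ((f s - f t) / (s - t) - L) < eps.
Proof.
  intros HT H He Heta. destruct (H eps He) as [d [Hd Hq]].
  set (s := t + Rmin d (Rmin eta (T - t)) / 2).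
  assert (Hm := Rmin_pos d (Rmin eta (T - t)) Hd (Rmin_pos eta (T - t) Heta ltac:(lra))).
  assert (Hm1 := Rmin_l d (Rmin eta (T - t))).
  assert (Hm2 := Rmin_r d (Rmin eta (T - t))).
  assert (Hm3 := Rmin_l eta (T - t)). assert (Hm4 := Rmin_r eta (T - t)).
  exists s. unfold s. repeat split; try lra. apply Hq; lra.
Qed.

Lemma right_deriv_ge0 f t T L : t < T -> right_deriv f t T L ->
  (forall s, t < s < T -> f t <= f s) -> 0 <= L.
Proof.
  intros HT H Hmon. apply Rnot_lt_le; intro HL.
  destruct (right_deriv_sample f t T L (- L) 1 HT H ltac:(lra) ltac:(lra))
    as [s [Hs [HsT Hq]]].
  assert (0 <= (f s - f t) / (s - t)).
  { apply Rdiv_le_0_compat; [|lra]. specialize (Hmon s ltac:(lra)). lra. }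
  unfold Rabs in Hq; destruct Rcase_abs in Hq; lra.
Qed.

Lemma right_deriv_eventually_const f t T L : t < T -> right_deriv f t T L ->
  (exists eta, eta > 0 /\ forall s, t < s < t + eta -> s < T -> f s = f t) -> L = 0.
Proof.
  intros HT H [eta [Heta Hc]]. apply NNPP; intro HL.
  destruct (right_deriv_sample f t T L (Rabs L) eta HT H
              ltac:(apply Rabs_pos_lt; exact HL) Heta) as [s [Hs [HsT Hq]]].
  rewrite (Hc s Hs HsT) in Hq.
  replace ((f t - f t) / (s - t) - L) with (- L) in Hq by (field; lra).
  rewrite Rabs_Ropp in Hq. lra.
Qed.

Lemma right_deriv_minus_id f t T L :
  right_deriv f t T L -> right_deriv (fun s => f s - s) t T (L - 1).
Proof.
  intros H eps He. destruct (H eps He) as [d [Hd Hq]].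
  exists d; split; [exact Hd|]. intros s Hts Hsd HsT.
  replace ((f s - s - (f t - t)) / (s - t) - (L - 1))
    with ((f s - f t) / (s - t) - L) by (field; lra).
  now apply Hq.
Qed.

Lemma derivable_pt_lim_linear_bound F x l : derivable_pt_lim F x l ->
  forall e, e > 0 -> exists d, d > 0 /\
    forall y, Rabs (y - x) < d -> Rabs (F y - F x - l * (y - x)) <= e * Rabs (y - x).
Proof.
  intros H e He. destruct (H e He) as [d Hq].
  exists d; split; [apply cond_pos|]. intros y Hy.
  destruct (Req_dec y x) as [->|Hne].
  { replace (F x - F x - l * (x - x)) with 0 by ring.
    rewrite Rabs_R0; apply Rmult_le_pos; [lra|apply Rabs_pos]. }
  assert (Hh : y - x <> 0) by lra.
  specialize (Hq (y - x) Hh Hy). replace (x + (y - x)) with y in Hq by ring.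
  replace (F y - F x - l * (y - x)) with (((F y - F x) / (y - x) - l) * (y - x))
    by (field; exact Hh).
  rewrite Rabs_mult. apply Rmult_le_compat_r; [apply Rabs_pos|lra].
Qed.

Lemma right_deriv_local_lipschitz c t T L : right_deriv c t T L ->
  exists d, d > 0 /\
    forall s, t < s < t + d -> s < T -> Rabs (c s - c t) <= (Rabs L + 1) * (s - t).
Proof.
  intros H. destruct (H 1 ltac:(lra)) as [d [Hd Hq]].
  exists d; split; [exact Hd|]. intros s Hs HsT.
  specialize (Hq s ltac:(lra) ltac:(lra) HsT).
  replace (c s - c t) with ((c s - c t) / (s - t) * (s - t)) by (field; lra).
  rewrite Rabs_mult, (Rabs_right (s - t)) by lra.
  apply Rmult_le_compat_r; [lra|].
  pose proof (Rabs_triang ((c s - c t) / (s - t) - L) L).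
  replace ((c s - c t) / (s - t) - L + L) with ((c s - c t) / (s - t)) in * by ring.
  lra.
Qed.

Lemma right_deriv_comp F c t T l L : derivable_pt_lim F (c t) l ->
  right_deriv c t T L -> right_deriv (fun s => F (c s)) t T (l * L).
Proof.
  intros HF Hc eps Heps.
  set (M := Rabs L + 1). assert (HM : M > 0) by (unfold M; pose proof (Rabs_pos L); lra).
  set (N := Rabs l + 1). assert (HN : N > 0) by (unfold N; pose proof (Rabs_pos l); lra).
  destruct (right_deriv_local_lipschitz c t T L Hc) as [d0 [Hd0 Hlip]].
  destruct (derivable_pt_lim_linear_bound F (c t) l HF (eps / (2 * M)))
    as [d [Hd HFb]]; [apply Rdiv_lt_0_compat; lra|].
  destruct (Hc (eps / (2 * N))) as [d1 [Hd1 Hq]]; [apply Rdiv_lt_0_compat; lra|].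
  assert (Hdm : Rmin d0 (Rmin d1 (d / M)) > 0)
    by (repeat apply Rmin_pos; try apply Rdiv_lt_0_compat; lra).
  exists (Rmin d0 (Rmin d1 (d / M))). split; [exact Hdm|]. intros s Hts Hsd HsT.
  pose proof (Rmin_l d0 (Rmin d1 (d / M))). pose proof (Rmin_r d0 (Rmin d1 (d / M))).
  pose proof (Rmin_l d1 (d / M)). pose proof (Rmin_r d1 (d / M)).
  specialize (Hlip s ltac:(lra) HsT). fold M in Hlip. specialize (Hq s Hts ltac:(lra) HsT).
  assert (Hnear : Rabs (c s - c t) < d).
  { apply Rle_lt_trans with (M * (s - t)); [exact Hlip|].
    replace d with (M * (d / M)) by (field; lra). apply Rmult_lt_compat_l; lra. }
  assert (HD : Rabs (F (c s) - F (c t) - l * (c s - c t)) <= eps / 2 * (s - t)).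
  { eapply Rle_trans; [apply (HFb (c s) Hnear)|].
    replace (eps / 2 * (s - t)) with (eps / (2 * M) * (M * (s - t))) by (field; lra).
    apply Rmult_le_compat_l; [apply Rlt_le, Rdiv_lt_0_compat|]; lra. }
  assert (Hl : Rabs (l * ((c s - c t) / (s - t) - L)) < eps / 2).
  { rewrite Rabs_mult. apply Rle_lt_trans with (Rabs l * (eps / (2 * N))).
    - apply Rmult_le_compat_l; [apply Rabs_pos|lra].
    - replace (eps / 2) with (N * (eps / (2 * N))) by (field; lra).
      apply Rmult_lt_compat_r; [apply Rdiv_lt_0_compat|unfold N]; lra. }
  replace ((F (c s) - F (c t)) / (s - t) - l * L)
    with ((F (c s) - F (c t) - l * (c s - c t)) / (s - t)
          + l * ((c s - c t) / (s - t) - L)) by (field; lra).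
  eapply Rle_lt_trans; [apply Rabs_triang|].
  enough (Rabs ((F (c s) - F (c t) - l * (c s - c t)) / (s - t)) <= eps / 2) by lra.
  unfold Rdiv. rewrite Rabs_mult, Rabs_inv, (Rabs_right (s - t)) by lra.
  apply (Rmult_le_reg_r (s - t)); [lra|].
  rewrite Rmult_assoc, Rinv_l, Rmult_1_r by lra. exact HD.
Qed.

Lemma real_induction (P : R -> Prop) a b : a < b -> P a ->
  (forall t, a <= t < b -> P t ->
     exists d, d > 0 /\ forall s, t <= s < t + d -> s < b -> P s) ->
  (forall t, a < t < b -> (forall s, a <= s < t -> P s) -> P t) ->
  forall t, a <= t < b -> P t.
Proof.
  intros Hab Pa Hstep Hclosed t0 Ht0. apply NNPP; intro Hn.
  set (E := fun u => a <= u <= t0 /\ forall s, a <= s <= u -> P s).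
  assert (Ea : E a).
  { split; [lra|]. intros s Hs. replace s with a by lra. exact Pa. }
  assert (HB : bound E) by (exists t0; intros u [Hu _]; lra).
  destruct (completeness E HB (ex_intro _ a Ea)) as [m [Hub Hlub]].
  assert (Ham : a <= m) by (apply Hub; exact Ea).
  assert (Hmt : m <= t0) by (apply Hlub; intros u [Hu _]; lra).
  assert (Hbelow : forall s, a <= s < m -> P s).
  { intros s Hs. apply NNPP; intro Hns.
    enough (m <= s) by lra. apply Hlub. intros u [Hu Pu].
    destruct (Rle_dec u s) as [|Hus]; [lra|]. exfalso; apply Hns, Pu; lra. }
  assert (Pm : P m).
  { destruct (Req_dec m a) as [->|Hma]; [exact Pa|]. apply Hclosed; [lra|exact Hbelow]. }
  destruct (Hstep m ltac:(lra) Pm) as [d [Hd Hd']].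
  destruct (Rlt_dec t0 (m + d)) as [Hlt|Hge].
  - apply Hn, Hd'; lra.
  - assert (E (m + d / 2)).
    { split; [lra|]. intros s Hs. destruct (Rlt_dec s m); [apply Hbelow; lra|].
      apply Hd'; lra. }
    enough (m + d / 2 <= m) by lra. apply Hub; assumption.
Qed.

Section ZeroRightDerivative.
Variables (psi : R -> R) (a b : R).
Hypothesis Hab : a < b.
Hypothesis Hderiv : forall s, a <= s < b -> right_deriv psi s b 0.
Hypothesis Hleft : forall s, a < s < b -> forall eps, eps > 0 -> exists d, d > 0 /\
  forall u, a <= u < s -> s - u < d -> Rabs (psi u - psi s) < eps.

Lemma right_deriv0_slope_bound e : e > 0 ->
  forall t, a <= t < b -> Rabs (psi t - psi a) <= e * (t - a).
Proof.
  intros He. apply real_induction; [exact Hab| | |].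
  - unfold Rminus; rewrite Rplus_opp_r, Rabs_R0; lra.
  - intros t Ht Pt. destruct (Hderiv t Ht e He) as [d [Hd Hq]].
    exists d; split; [exact Hd|]. intros s Hs Hsb.
    destruct (Req_dec s t) as [->|Hst]; [exact Pt|].
    specialize (Hq s ltac:(lra) ltac:(lra) Hsb). rewrite Rminus_0_r in Hq.
    assert (Rabs (psi s - psi t) < e * (s - t)).
    { replace (psi s - psi t) with ((psi s - psi t) / (s - t) * (s - t)) by (field; lra).
      rewrite Rabs_mult, (Rabs_right (s - t)) by lra.
      apply Rmult_lt_compat_r; lra. }
    pose proof (Rabs_triang (psi s - psi t) (psi t - psi a)).
    replace (psi s - psi t + (psi t - psi a)) with (psi s - psi a) in * by ring.
    lra.
  - intros t Ht Hbelow. apply Rnot_lt_le; intro Hgt.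
    set (gap := Rabs (psi t - psi a) - e * (t - a)).
    destruct (Hleft t Ht gap ltac:(unfold gap; lra)) as [d [Hd Hu]].
    set (u := Rmax a (t - d / 2)).
    assert (Hu1 : a <= u) by apply Rmax_l.
    assert (Hu2 : t - d / 2 <= u) by apply Rmax_r.
    assert (Hu3 : u < t) by (unfold u, Rmax; destruct Rle_dec; lra).
    specialize (Hu u ltac:(lra) ltac:(lra)). specialize (Hbelow u ltac:(lra)).
    pose proof (Rabs_triang (psi t - psi u) (psi u - psi a)).
    replace (psi t - psi u + (psi u - psi a)) with (psi t - psi a) in * by ring.
    rewrite <- Rabs_Ropp in Hu. replace (- (psi u - psi t)) with (psi t - psi u) in Hu by ring.
    assert (e * (u - a) <= e * (t - a)) by (apply Rmult_le_compat_l; lra).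
    unfold gap in Hu. lra.
Qed.

Lemma right_deriv0_const s : a <= s < b -> psi s = psi a.
Proof.
  intros Hs. enough (Rabs (psi s - psi a) <= 0)
    by (pose proof (Rabs_pos (psi s - psi a)); apply Rminus_diag_uniq, Rabs_eq_0; lra).
  apply Rle_plus_epsilon. intros eps Heps.
  pose proof (right_deriv0_slope_bound (eps / (s - a + 1)) ltac:(apply Rdiv_lt_0_compat; lra) s Hs).
  enough (eps / (s - a + 1) * (s - a) <= eps) by lra.
  apply (Rmult_le_reg_r (s - a + 1)); [lra|].
  replace (eps / (s - a + 1) * (s - a) * (s - a + 1)) with (eps * (s - a)) by (field; lra).
  nra.
Qed.

End ZeroRightDerivative.

Lemma derivable_nonzero_inj (F f' : R -> R) lo hi :
  (forall x, lo < x < hi -> derivable_pt_lim F x (f' x)) ->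
  (forall x, lo < x < hi -> f' x <> 0) ->
  forall x y, lo < x < hi -> lo < y < hi -> F x = F y -> x = y.
Proof.
  intros HD Hnz.
  assert (Hlt : forall x y, lo < x -> x < y -> y < hi -> F x <> F y).
  { intros x y Hx Hxy Hy Heq.
    destruct (MVT_cor2 F f' x y Hxy) as [c [Hc Hcxy]]; [intros c Hc; apply HD; lra|].
    rewrite Heq, Rminus_diag in Hc. symmetry in Hc.
    destruct (Rmult_integral _ _ Hc); [apply (Hnz c)|]; lra. }
  intros x y Hx Hy Heq. destruct (Rtotal_order x y) as [H|[H|H]]; [|exact H|].
  - exfalso; apply (Hlt x y); lra.
  - exfalso; apply (Hlt y x); lra.
Qed.

Lemma derivable_pos_increasing (F f' : R -> R) lo hi :
  (forall x, lo <= x <= hi -> derivable_pt_lim F x (f' x)) ->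
  (forall x, lo <= x <= hi -> f' x > 0) ->
  forall x y, lo <= x -> x < y -> y <= hi -> F x < F y.
Proof.
  intros HD Hpos x y Hx Hxy Hy.
  destruct (MVT_cor2 F f' x y Hxy) as [c [Hc Hcxy]]; [intros c Hc; apply HD; lra|].
  enough (0 < f' c * (y - x)) by lra.
  apply Rmult_lt_0_compat; [apply Hpos|]; lra.
Qed.

Lemma increasing_inverse_deriv (F f' : R -> R) lo hi : lo < hi ->
  (forall x, lo <= x <= hi -> derivable_pt_lim F x (f' x)) ->
  (forall x, lo <= x <= hi -> f' x > 0) ->
  exists c : R -> R,
    (forall t, F lo <= t <= F hi -> lo <= c t <= hi /\ F (c t) = t) /\
    (forall t, F lo < t < F hi -> derivable_pt_lim c t (/ f' (c t))).
Proof.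
  intros Hlohi HD Hpos.
  pose proof (derivable_pos_increasing F f' lo hi HD Hpos) as Finc.
  assert (Fcont : forall x, lo <= x <= hi -> continuity_pt F x)
    by (intros x Hx; apply derivable_continuous_pt; exists (f' x); apply HD, Hx).
  set (c := fun t => epsilon (inhabits 0) (fun x => lo <= x <= hi /\ F x = t)).
  assert (Hc : forall t, F lo <= t <= F hi -> lo <= c t <= hi /\ F (c t) = t).
  { intros t Ht. apply (epsilon_spec (inhabits 0) (fun x => lo <= x <= hi /\ F x = t)).
    destruct (f_interv_is_interv F lo hi t Hlohi Ht Fcont) as [x Hx]. now exists x. }
  exists c. split; [exact Hc|]. intros t Ht.
  assert (cmono : forall u v, F lo <= u -> u <= v -> v <= F hi -> c u <= c v).
  { intros u v Hu Huv Hv. apply Rnot_lt_le; intro Hlt.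
    destruct (Hc u ltac:(lra)) as [Hcu Fu]. destruct (Hc v ltac:(lra)) as [Hcv Fv].
    pose proof (Finc (c v) (c u) ltac:(lra) Hlt ltac:(lra)). lra. }
  assert (Hcont : continuity_pt c t).
  { apply (continuity_pt_recip_interv F c lo hi Hlohi Finc); [| |exact Fcont|exact Ht].
    - intros u Hu1 Hu2. apply (proj2 (Hc u ltac:(lra))).
    - intros u Hu1 Hu2. apply (proj1 (Hc u ltac:(lra))). }
  assert (Prf : forall x, c (F lo) <= x <= c (F hi) -> derivable_pt F x).
  { intros x Hx. exists (f' x). apply HD.
    destruct (Hc (F lo) ltac:(lra)), (Hc (F hi) ltac:(lra)). lra. }
  assert (Hct : c (F lo) <= c t <= c (F hi)) by (split; apply cmono; lra).
  pose proof (derivable_pt_lim_recip_interv F c (F lo) (F hi) t Prf Hcont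
                ltac:(lra) Ht Hct) as Hinv.
  rewrite (derive_pt_eq_0 F (c t) (f' (c t)) _ (HD (c t) ltac:(apply Hc; lra))) in Hinv.
  replace (/ f' (c t)) with (1 / f' (c t)) by (unfold Rdiv; ring).
  apply Hinv.
  - intros u Hu. apply (proj2 (Hc u Hu)).
  - pose proof (Hpos (c t) ltac:(apply Hc; lra)). lra.
Qed.

(* Extending Y constantly to the left of the vertex makes the time function
   differentiable at 0 as well. *)
Definition vf_ext (Y : R -> R) (u : R) : R := Y (Rmax 0 u).

Definition flow_time (Y : R -> R) (x : R) : R := RInt (fun u => / vf_ext Y u) 0 x.

Section FlowTime.
Variable Y : R -> R.
Hypothesis HY : vf_continuous Y.
Hypothesis HYns : nonsingular Y.

Lemma vf_ext_id x : 0 <= x -> vf_ext Y x = Y x.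
Proof. intros Hx. unfold vf_ext. now rewrite Rmax_right. Qed.

Lemma vf_ext_neq0 x : x < 1 -> vf_ext Y x <> 0.
Proof. intros Hx. apply HYns. unfold Rmax; destruct Rle_dec; lra. Qed.

Lemma vf_ext_continuous x : -1 < x < 1 -> continuity_pt (vf_ext Y) x.
Proof.
  intros Hx eps Heps.
  assert (H0 : 0 <= Rmax 0 x < 1) by (unfold Rmax; destruct Rle_dec; lra).
  destruct (HY _ H0 eps Heps) as [d [Hd Hclose]].
  exists (Rmin d (1 - x)); split; [apply Rmin_pos; lra|].
  intros y [_ Hy]; simpl in *; unfold R_dist in *.
  pose proof (Rmin_l d (1 - x)). pose proof (Rmin_r d (1 - x)).
  apply Hclose.
  - unfold Rabs in Hy; destruct Rcase_abs in Hy; unfold Rmax; destruct Rle_dec; lra.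
  - unfold Rmax, Rabs in *; destruct (Rle_dec 0 y), (Rle_dec 0 x);
      repeat destruct Rcase_abs; lra.
Qed.

Lemma flow_time_deriv x : -1 < x < 1 -> derivable_pt_lim (flow_time Y) x (/ vf_ext Y x).
Proof.
  assert (Hcont : forall z, -1 < z < 1 -> continuous (fun u => / vf_ext Y u) z).
  { intros z Hz. apply continuity_pt_filterlim, continuity_pt_inv;
      [apply vf_ext_continuous, Hz|apply vf_ext_neq0; lra]. }
  intros Hx. apply is_derive_Reals.
  apply (is_derive_RInt (fun u => / vf_ext Y u) (flow_time Y) 0 x); [|apply Hcont, Hx].
  apply (locally_interval _ x (-1) 1); try easy.
  intros y Hy1 Hy2; simpl in Hy1, Hy2. apply (@RInt_correct R_CompleteNormedModule).
  apply (@ex_RInt_continuous R_CompleteNormedModule). intros z Hz. apply Hcont.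
  split; [apply Rlt_le_trans with (Rmin 0 y)|apply Rle_lt_trans with (Rmax 0 y)];
    try apply Hz; unfold Rmin, Rmax; destruct Rle_dec; lra.
Qed.

Lemma flow_time_continuous x : -1 < x < 1 -> continuity_pt (flow_time Y) x.
Proof. intros Hx. apply derivable_continuous_pt. eexists. now apply flow_time_deriv. Qed.

Lemma flow_time_inj x y : -1 < x < 1 -> -1 < y < 1 -> flow_time Y x = flow_time Y y -> x = y.
Proof.
  apply (derivable_nonzero_inj _ _ (-1) 1 flow_time_deriv).
  intros z Hz. apply Rinv_neq_0_compat, vf_ext_neq0; lra.
Qed.

Lemma vf_pos : Y 0 > 0 -> forall x, 0 <= x < 1 -> Y x > 0.
Proof.
  intros H0 x Hx. destruct (Rtotal_order (Y x) 0) as [Hneg|[Hz|]]; [|now apply HYns in Hz|easy].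
  exfalso. destruct (Req_dec x 0) as [->|Hx0]; [lra|].
  destruct (Ranalysis5.IVT_interv (fun u => - vf_ext Y u) 0 x) as [z [Hz Hz0]].
  - intros z Hz. apply continuity_pt_opp, vf_ext_continuous; lra.
  - lra.
  - rewrite vf_ext_id; lra.
  - rewrite vf_ext_id; lra.
  - apply (vf_ext_neq0 z); lra.
Qed.

End FlowTime.

Lemma star_dist_sym p q : star_dist p q = star_dist q p.
Proof.
  destruct p as [a x], q as [b y]; unfold star_dist; simpl.
  rewrite Nat.eqb_sym. destruct (Nat.eqb b a); [apply Rabs_minus_sym|ring].
Qed.

Lemma star_dist_ge0 p q : 0 <= snd p -> 0 <= snd q -> 0 <= star_dist p q.
Proof.
  destruct p as [a x], q as [b y]; unfold star_dist; simpl; intros.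
  destruct (Nat.eqb a b); [apply Rabs_pos|lra].
Qed.

Lemma star_dist_triangle p q r : 0 <= snd p -> 0 <= snd q -> 0 <= snd r ->
  star_dist p r <= star_dist p q + star_dist q r.
Proof.
  destruct p as [a x], q as [b y], r as [c z]; unfold star_dist; simpl; intros.
  destruct (Nat.eqb a b) eqn:E1, (Nat.eqb b c) eqn:E2, (Nat.eqb a c) eqn:E3;
    rewrite ?Nat.eqb_eq, ?Nat.eqb_neq in *; try (exfalso; lia);
    unfold Rabs; repeat destruct Rcase_abs; lra.
Qed.

Lemma star_dist_eq0 p q : 0 <= snd p -> 0 <= snd q -> star_dist p q = 0 -> star_eq p q.
Proof.
  destruct p as [a x], q as [b y]; unfold star_dist, star_eq; simpl; intros.
  destruct (Nat.eqb a b) eqn:E; rewrite ?Nat.eqb_eq in E.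
  - left. subst. f_equal. unfold Rabs in *; destruct Rcase_abs; lra.
  - right; lra.
Qed.

Lemma star_eq_dist p q : star_eq p q -> star_dist p q = 0.
Proof.
  destruct p as [a x], q as [b y]; unfold star_dist, star_eq; simpl.
  intros [H|[-> ->]].
  - injection H as -> ->. rewrite Nat.eqb_refl, Rminus_diag. apply Rabs_R0.
  - destruct (Nat.eqb a b); [rewrite Rminus_diag; apply Rabs_R0|ring].
Qed.

Lemma coord_self e x : coord e (e, x) = x.
Proof. unfold coord; simpl; now rewrite Nat.eqb_refl. Qed.

Lemma coord_vertex e p : snd p = 0 -> coord e p = 0.
Proof. destruct p as [a x]; unfold coord; simpl; intros; now destruct (Nat.eqb a e). Qed.

Lemma coord_bounds e p : 0 <= snd p < 1 -> 0 <= coord e p < 1.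
Proof. destruct p as [a x]; unfold coord; simpl; intros; destruct (Nat.eqb a e); lra. Qed.

Lemma coord_star_eq e p q : star_eq p q -> coord e p = coord e q.
Proof.
  intros [->|[Hp Hq]]; [reflexivity|]. now rewrite !coord_vertex.
Qed.

Lemma coord_dist e p q : 0 <= snd p -> 0 <= snd q -> on_edge e p -> on_edge e q ->
  Rabs (coord e p - coord e q) <= star_dist p q.
Proof.
  destruct p as [a x], q as [b y]; unfold star_dist, coord, on_edge; simpl; intros Hx Hy Hp Hq.
  destruct (Nat.eqb a b) eqn:E1, (Nat.eqb a e) eqn:E2, (Nat.eqb b e) eqn:E3;
    rewrite ?Nat.eqb_eq, ?Nat.eqb_neq in *; try (exfalso; lia);
    destruct Hp, Hq; try (exfalso; lia); subst; unfold Rabs; repeat destruct Rcase_abs; lra.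
Qed.

Lemma on_edge_coord_inj e p q : on_edge e p -> on_edge e q ->
  coord e p = coord e q -> star_eq p q.
Proof.
  destruct p as [a x], q as [b y]; unfold star_eq, coord, on_edge; simpl; intros Hp Hq H.
  destruct (Nat.eqb a e) eqn:E2, (Nat.eqb b e) eqn:E3;
    rewrite ?Nat.eqb_eq, ?Nat.eqb_neq in *; subst.
  - now left.
  - destruct Hq; [lia|]. right; lra.
  - destruct Hp; [lia|]. right; lra.
  - destruct Hp, Hq; try lia. right; lra.
Qed.

Lemma on_edge_interior e p : on_edge e p -> snd p <> 0 -> fst p = e.
Proof. now intros [H|H]. Qed.

Lemma on_two_edges i e p : on_edge i p -> on_edge e p -> i <> e -> snd p = 0.
Proof. intros [H|H] [H'|H'] Hne; auto; congruence. Qed.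

Definition moves_along (K : nat) (X : nat -> R -> R) (g : R -> nat * R) (T t : R) (i : nat)
  : Prop :=
  (i < K)%nat /\
  (exists delta, delta > 0 /\
     forall s, t <= s -> s < t + delta -> s < T -> on_edge i (g s)) /\
  right_deriv (fun s => coord i (g s)) t T (X i (coord i (g t))).

Section StarSolutions.
Variables (K : nat) (X : nat -> R -> R).

Lemma star_solution_moves g T t : star_solution K X g T -> 0 <= t < T ->
  exists i, moves_along K X g T t i.
Proof. intros [_ [_ [_ Hmoves]]] Ht. exact (Hmoves t Ht). Qed.

Lemma star_solution_snd g T t : star_solution K X g T -> 0 <= t < T -> 0 <= snd (g t) < 1.
Proof. intros [_ [Hpt _]] Ht. apply (Hpt t Ht). Qed.

Lemma star_solution_coord g T e t : star_solution K X g T -> 0 <= t < T ->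
  0 <= coord e (g t) < 1.
Proof. intros Hg Ht. apply coord_bounds, (star_solution_snd g T t Hg Ht). Qed.

Lemma star_solution_restrict g T T' : star_solution K X g T -> 0 < T' <= T ->
  star_solution K X g T'.
Proof.
  intros [HT [Hpt [Hc Hmoves]]] HT'. split; [lra|]. split; [intros; apply Hpt; lra|]. split.
  - intros t Ht eps He. destruct (Hc t ltac:(lra) eps He) as [d [Hd Hclose]].
    exists d; split; [exact Hd|]. intros s Hs Hst. apply Hclose; lra.
  - intros t Ht. destruct (Hmoves t ltac:(lra)) as [i [Hi [[d [Hd Hon]] Hr]]].
    exists i; split; [exact Hi|]. split.
    + exists d; split; [exact Hd|]. intros s Hts Hsd HsT; apply Hon; lra.
    + now apply (right_deriv_restrict _ _ T).
Qed.

Lemma star_solution_of_edge_path k x T : (k < K)%nat -> T > 0 ->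
  (forall t, 0 <= t < T -> 0 <= x t < 1) ->
  cont_on_time (fun a b => Rabs (a - b)) x T ->
  (forall t, 0 <= t < T -> right_deriv x t T (X k (x t))) ->
  star_solution K X (fun t => (k, x t)) T.
Proof.
  intros Hk HT Hx Hc Hd. split; [exact HT|]. split; [intros t Ht; split; [exact Hk|apply Hx, Ht]|].
  split.
  - intros t Ht eps He. destruct (Hc t Ht eps He) as [d [Hd0 Hclose]].
    exists d; split; [exact Hd0|]. intros s Hs Hst. unfold star_dist; simpl.
    rewrite Nat.eqb_refl. now apply Hclose.
  - intros t Ht. exists k. split; [exact Hk|]. split.
    + exists 1. split; [lra|]. intros; now left.
    + rewrite coord_self. apply (right_deriv_ext x); [intros s; now rewrite coord_self|].
      apply Hd, Ht.
Qed.

Lemma cont_on_time_of_continuity x T : (forall t, 0 <= t < T -> continuity_pt x t) ->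
  cont_on_time (fun a b => Rabs (a - b)) x T.
Proof.
  intros Hc t Ht eps He. destruct (Hc t Ht eps He) as [d [Hd Hclose]].
  exists d; split; [exact Hd|]. intros s Hs Hst.
  destruct (Req_dec s t) as [->|Hne]; [rewrite Rminus_diag, Rabs_R0; lra|].
  apply (Hclose s). split; [split; [exact I|congruence]|exact Hst].
Qed.

Hypothesis Hns : forall i, (i < K)%nat -> nonsingular (X i).

Lemma moves_along_vertex_pos g T t i : star_solution K X g T -> 0 <= t < T ->
  snd (g t) = 0 -> moves_along K X g T t i -> X i 0 > 0.
Proof.
  intros Hg Ht Hv [Hi [_ Hr]].
  rewrite (coord_vertex i _ Hv) in Hr.
  assert (0 <= X i 0).
  { apply (right_deriv_ge0 (fun s => coord i (g s)) t T); [lra|exact Hr|].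
    intros s Hs. rewrite (coord_vertex i _ Hv).
    pose proof (star_solution_coord g T i s Hg ltac:(lra)); lra. }
  assert (X i 0 <> 0) by (apply Hns; [exact Hi|lra]). lra.
Qed.

(* A solution cannot switch to another edge i while on edge e: it would have
   to sit at the vertex, forcing X i 0 = 0. *)
Lemma star_solution_edge_deriv g T e t d : star_solution K X g T -> 0 <= t ->
  (forall s, t <= s < t + d -> s < T -> on_edge e (g s)) ->
  forall s, t <= s < t + d -> s < T ->
  right_deriv (fun u => coord e (g u)) s T (X e (coord e (g s))).
Proof.
  intros Hg Ht Hon s Hs HsT.
  destruct (star_solution_moves g T s Hg ltac:(lra)) as [i [Hi [[ds [Hds Honi]] Hr]]].
  destruct (Nat.eq_dec i e) as [<-|Hne]; [exact Hr|]. exfalso.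
  pose proof (Rmin_l ds (t + d - s)). pose proof (Rmin_r ds (t + d - s)).
  assert (Hm : Rmin ds (t + d - s) > 0) by (apply Rmin_pos; lra).
  set (m := Rmin ds (t + d - s)) in *.
  assert (Hv : forall u, s <= u < s + m -> u < T -> snd (g u) = 0).
  { intros u Hu HuT. apply (on_two_edges i e); [apply Honi|apply Hon|]; auto; lra. }
  assert (Hvs : snd (g s) = 0) by (apply Hv; lra).
  rewrite (coord_vertex i _ Hvs) in Hr.
  apply (Hns i Hi 0); [lra|].
  apply (right_deriv_eventually_const (fun u => coord i (g u)) s T); [lra|exact Hr|].
  exists m. split; [exact Hm|]. intros u Hu HuT.
  now rewrite (coord_vertex i _ (Hv u ltac:(lra) HuT)), (coord_vertex i _ Hvs).
Qed.

Hypothesis Hvf : forall i, (i < K)%nat -> vf_continuous (X i).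

Lemma flow_time_coord_continuous g T e t d : star_solution K X g T -> (e < K)%nat ->
  0 <= t -> (forall s, t <= s < t + d -> s < T -> on_edge e (g s)) ->
  forall s, t <= s < t + d -> s < T -> forall eps, eps > 0 ->
  exists eta, eta > 0 /\ forall u, t <= u < t + d -> u < T -> Rabs (u - s) < eta ->
    Rabs (flow_time (X e) (coord e (g u)) - flow_time (X e) (coord e (g s))) < eps.
Proof.
  intros Hg He Ht Hon s Hs HsT eps Heps.
  pose proof (star_solution_coord g T e s Hg ltac:(lra)).
  destruct (flow_time_continuous (X e) (Hvf e He) (Hns e He) (coord e (g s))
              ltac:(lra) eps Heps) as [eta [Heta HF]].
  pose proof Hg as [_ [_ [Hc _]]].
  destruct (Hc s ltac:(lra) eta Heta) as [d1 [Hd1 Hclose]].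
  exists d1. split; [exact Hd1|]. intros u Hu HuT Hsu.
  destruct (Req_dec (coord e (g u)) (coord e (g s))) as [->|Hne];
    [rewrite Rminus_diag, Rabs_R0; lra|].
  apply HF. split; [split; [exact I|now apply not_eq_sym]|].
  apply Rle_lt_trans with (star_dist (g u) (g s)); [|apply Hclose; lra].
  pose proof (star_solution_snd g T u Hg ltac:(lra)).
  pose proof (star_solution_snd g T s Hg ltac:(lra)).
  apply coord_dist; try lra; apply Hon; lra.
Qed.

Lemma flow_time_along_solution g T e t d : star_solution K X g T -> (e < K)%nat ->
  d > 0 -> 0 <= t < T ->
  (forall s, t <= s < t + d -> s < T -> on_edge e (g s)) ->
  forall s, t <= s < Rmin (t + d) T ->
  flow_time (X e) (coord e (g s)) - s = flow_time (X e) (coord e (g t)) - t.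
Proof.
  intros Hg He Hd Ht Hon.
  pose proof (Rmin_l (t + d) T). pose proof (Rmin_r (t + d) T).
  assert (Htb : t < Rmin (t + d) T) by (unfold Rmin; destruct Rle_dec; lra).
  apply (right_deriv0_const (fun s => flow_time (X e) (coord e (g s)) - s) t _ Htb).
  - intros s Hs. pose proof (star_solution_coord g T e s Hg ltac:(lra)) as Hx.
    replace 0 with (/ vf_ext (X e) (coord e (g s)) * X e (coord e (g s)) - 1)
      by (rewrite vf_ext_id by lra; field; apply (Hns e He); lra).
    apply right_deriv_minus_id, right_deriv_comp.
    + apply flow_time_deriv; [apply Hvf, He|apply Hns, He|lra].
    + apply (right_deriv_restrict _ _ T); [lra|].
      apply (star_solution_edge_deriv g T e t d Hg); [lra|exact Hon|lra|lra].
  - intros s Hs eps Heps.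
    destruct (flow_time_coord_continuous g T e t d Hg He ltac:(lra) Hon s
                ltac:(lra) ltac:(lra) (eps / 2) ltac:(lra)) as [eta [Heta Hclose]].
    exists (Rmin eta (eps / 2)). split; [apply Rmin_pos; lra|]. intros u Hu Hsu.
    pose proof (Rmin_l eta (eps / 2)). pose proof (Rmin_r eta (eps / 2)).
    specialize (Hclose u ltac:(lra) ltac:(lra) ltac:(rewrite Rabs_left; lra)).
    pose proof (Rabs_triang (flow_time (X e) (coord e (g u)) - flow_time (X e) (coord e (g s)))
                  (s - u)) as Htri.
    rewrite (Rabs_right (s - u)) in Htri by lra.
    replace (flow_time (X e) (coord e (g u)) - flow_time (X e) (coord e (g s)) + (s - u))
      with (flow_time (X e) (coord e (g u)) - u - (flow_time (X e) (coord e (g s)) - s))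
      in Htri by ring.
    lra.
Qed.

Hypothesis Hpos_unique : forall i j, (i < K)%nat -> (j < K)%nat ->
  X i 0 > 0 -> X j 0 > 0 -> i = j.

Lemma moves_along_same_edge g1 g2 T t e1 e2 :
  star_solution K X g1 T -> star_solution K X g2 T -> 0 <= t < T ->
  star_eq (g1 t) (g2 t) -> moves_along K X g1 T t e1 -> moves_along K X g2 T t e2 -> e1 = e2.
Proof.
  intros Hg1 Hg2 Ht Heq M1 M2.
  destruct (Req_dec (snd (g1 t)) 0) as [Hv|Hnv].
  - assert (Hv2 : snd (g2 t) = 0) by (destruct Heq as [<-|[_ ?]]; auto).
    apply Hpos_unique; [apply M1|apply M2|..].
    + exact (moves_along_vertex_pos g1 T t e1 Hg1 Ht Hv M1).
    + exact (moves_along_vertex_pos g2 T t e2 Hg2 Ht Hv2 M2).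
  - destruct Heq as [Heq|[? _]]; [|contradiction].
    destruct M1 as [_ [[d1 [Hd1 Hon1]] _]], M2 as [_ [[d2 [Hd2 Hon2]] _]].
    assert (F1 := on_edge_interior e1 _ (Hon1 t ltac:(lra) ltac:(lra) ltac:(lra)) Hnv).
    rewrite Heq in Hnv.
    assert (F2 := on_edge_interior e2 _ (Hon2 t ltac:(lra) ltac:(lra) ltac:(lra)) Hnv).
    congruence.
Qed.

Lemma star_solutions_locally_eq g1 g2 T t :
  star_solution K X g1 T -> star_solution K X g2 T -> 0 <= t < T ->
  star_eq (g1 t) (g2 t) ->
  exists d, d > 0 /\ forall s, t <= s < t + d -> s < T -> star_eq (g1 s) (g2 s).
Proof.
  intros Hg1 Hg2 Ht Heq.
  destruct (star_solution_moves g1 T t Hg1 Ht) as [e M1].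
  destruct (star_solution_moves g2 T t Hg2 Ht) as [e2 M2].
  rewrite <- (moves_along_same_edge g1 g2 T t e e2 Hg1 Hg2 Ht Heq M1 M2) in M2.
  destruct M1 as [He [[d1 [Hd1 Hon1]] _]], M2 as [_ [[d2 [Hd2 Hon2]] _]].
  pose proof (Rmin_l d1 d2). pose proof (Rmin_r d1 d2).
  assert (Hm : Rmin d1 d2 > 0) by (apply Rmin_pos; lra).
  set (m := Rmin d1 d2) in *.
  exists m. split; [exact Hm|]. intros s Hs HsT.
  assert (On1 : forall u, t <= u < t + m -> u < T -> on_edge e (g1 u))
    by (intros u Hu HuT; apply Hon1; lra).
  assert (On2 : forall u, t <= u < t + m -> u < T -> on_edge e (g2 u))
    by (intros u Hu HuT; apply Hon2; lra).
  assert (Hsb : t <= s < Rmin (t + m) T) by (unfold Rmin; destruct Rle_dec; lra).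
  pose proof (flow_time_along_solution g1 T e t m Hg1 He Hm Ht On1 s Hsb) as C1.
  pose proof (flow_time_along_solution g2 T e t m Hg2 He Hm Ht On2 s Hsb) as C2.
  rewrite (coord_star_eq e _ _ Heq) in C1.
  apply (on_edge_coord_inj e); [apply On1; lra|apply On2; lra|].
  pose proof (star_solution_coord g1 T e s Hg1 ltac:(lra)).
  pose proof (star_solution_coord g2 T e s Hg2 ltac:(lra)).
  apply (flow_time_inj (X e) (Hvf e He) (Hns e He)); lra.
Qed.

Lemma star_solutions_eq_left_closed g1 g2 T u :
  star_solution K X g1 T -> star_solution K X g2 T -> 0 < u < T ->
  (forall s, 0 <= s < u -> star_eq (g1 s) (g2 s)) -> star_eq (g1 u) (g2 u).
Proof.
  intros Hg1 Hg2 Hu Hbelow.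
  pose proof Hg1 as [_ [_ [Hc1 _]]]. pose proof Hg2 as [_ [_ [Hc2 _]]].
  pose proof (star_solution_snd g1 T u Hg1 ltac:(lra)).
  pose proof (star_solution_snd g2 T u Hg2 ltac:(lra)).
  apply star_dist_eq0; try lra. apply NNPP; intro Hne.
  set (D := star_dist (g1 u) (g2 u)).
  assert (HD : D > 0) by (pose proof (star_dist_ge0 (g1 u) (g2 u)); unfold D in *; lra).
  destruct (Hc1 u ltac:(lra) (D / 3) ltac:(lra)) as [a1 [Ha1 Hclose1]].
  destruct (Hc2 u ltac:(lra) (D / 3) ltac:(lra)) as [a2 [Ha2 Hclose2]].
  pose proof (Rmin_l a1 a2). pose proof (Rmin_r a1 a2). pose proof (Rmin_pos a1 a2 Ha1 Ha2).
  set (v := Rmax 0 (u - Rmin a1 a2 / 2)).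
  assert (Hv : 0 <= v < u /\ u - Rmin a1 a2 / 2 <= v)
    by (unfold v, Rmax; destruct Rle_dec; lra).
  assert (Hvu : Rabs (v - u) < Rmin a1 a2) by (rewrite Rabs_left; lra).
  specialize (Hclose1 v ltac:(lra) ltac:(lra)). specialize (Hclose2 v ltac:(lra) ltac:(lra)).
  pose proof (star_eq_dist _ _ (Hbelow v ltac:(lra))).
  pose proof (star_solution_snd g1 T v Hg1 ltac:(lra)).
  pose proof (star_solution_snd g2 T v Hg2 ltac:(lra)).
  pose proof (star_dist_triangle (g1 u) (g1 v) (g2 u) ltac:(lra) ltac:(lra) ltac:(lra)).
  pose proof (star_dist_triangle (g1 v) (g2 v) (g2 u) ltac:(lra) ltac:(lra) ltac:(lra)).
  rewrite star_dist_sym in Hclose1. unfold D in *. lra.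
Qed.

Lemma star_solutions_eq g1 T1 g2 T2 :
  star_solution K X g1 T1 -> star_solution K X g2 T2 -> star_eq (g1 0) (g2 0) ->
  forall t, 0 <= t -> t < T1 -> t < T2 -> star_eq (g1 t) (g2 t).
Proof.
  intros Hg1 Hg2 H0 t Ht0 Ht1 Ht2.
  pose proof Hg1 as [HT1 _]. pose proof Hg2 as [HT2 _].
  pose proof (Rmin_l T1 T2). pose proof (Rmin_r T1 T2).
  assert (HT : 0 < Rmin T1 T2) by (apply Rmin_pos; lra).
  pose proof (star_solution_restrict g1 T1 (Rmin T1 T2) Hg1 ltac:(lra)) as R1.
  pose proof (star_solution_restrict g2 T2 (Rmin T1 T2) Hg2 ltac:(lra)) as R2.
  apply (real_induction (fun t => star_eq (g1 t) (g2 t)) 0 (Rmin T1 T2) HT H0).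
  - intros u Hu Pu. exact (star_solutions_locally_eq g1 g2 _ u R1 R2 Hu Pu).
  - intros u Hu Hbelow. exact (star_solutions_eq_left_closed g1 g2 _ u R1 R2 Hu Hbelow).
  - split; [exact Ht0|]. unfold Rmin; destruct Rle_dec; lra.
Qed.

End StarSolutions.

Lemma star_solution_from_vertex K X i : (i < K)%nat ->
  vf_continuous (X i) -> nonsingular (X i) -> X i 0 > 0 ->
  exists g T, star_solution K X g T /\ g 0 = (i, 0).
Proof.
  intros Hi HY HYns HY0.
  set (F := flow_time (X i)).
  assert (HD : forall x, -1/2 <= x <= 1/2 -> derivable_pt_lim F x (/ vf_ext (X i) x))
    by (intros x Hx; apply flow_time_deriv; auto; lra).
  assert (Hpos : forall x, -1/2 <= x <= 1/2 -> / vf_ext (X i) x > 0).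
  { intros x Hx. apply Rinv_0_lt_compat, (vf_pos (X i) HY HYns HY0).
    unfold Rmax; destruct Rle_dec; lra. }
  pose proof (derivable_pos_increasing F _ (-1/2) (1/2) HD Hpos) as Finc.
  (* Inverting F on [-1/2, 1/2] rather than [0, 1/2] puts time 0 inside the
     domain of the inverse, where it is differentiable. *)
  destruct (increasing_inverse_deriv F _ (-1/2) (1/2) ltac:(lra) HD Hpos) as [c [Hc Hcd]].
  assert (F0 : F 0 = 0) by exact (@RInt_point R_CompleteNormedModule 0 _).
  pose proof (Finc (-1/2) 0 ltac:(lra) ltac:(lra) ltac:(lra)) as Fneg.
  pose proof (Finc 0 (1/2) ltac:(lra) ltac:(lra) ltac:(lra)) as Fpos.
  assert (Hc0 : forall t, 0 <= t < F (1/2) -> 0 <= c t <= 1/2).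
  { intros t Ht. destruct (Hc t ltac:(lra)) as [Hct Ft]. split; [|lra].
    apply Rnot_lt_le; intro Hlt. pose proof (Finc (c t) 0 ltac:(lra) Hlt ltac:(lra)). lra. }
  exists (fun t => (i, c t)), (F (1/2)). split.
  - apply star_solution_of_edge_path; [exact Hi|lra|..].
    + intros t Ht. pose proof (Hc0 t Ht). lra.
    + apply cont_on_time_of_continuity. intros t Ht.
      apply derivable_continuous_pt. eexists. apply Hcd; lra.
    + intros t Ht. apply right_deriv_of_derivable.
      rewrite <- (vf_ext_id (X i)) by apply Hc0, Ht.
      rewrite <- (Rinv_inv (vf_ext (X i) (c t))). apply Hcd; lra.
  - f_equal. destruct (Hc 0 ltac:(lra)) as [Hc0r Fc0].
    apply (flow_time_inj (X i) HY HYns); [lra|lra|]. fold F. lra.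
Qed.

Lemma star_solution_from_interior K X k x : (k < K)%nat -> local_semiflow_open (X k) ->
  0 < x < 1 -> exists g T, star_solution K X g T /\ g 0 = (k, x).
Proof.
  intros Hk [Hex _] Hx. destruct (Hex x Hx) as [y [T [[HT [Hy [Hc Hd]]] Hy0]]].
  exists (fun t => (k, y t)), T. split; [|now rewrite Hy0].
  apply star_solution_of_edge_path; auto.
  intros t Ht. pose proof (Hy t Ht). lra.
Qed.

Theorem mainTheorem9 (K : nat) (X : nat -> R -> R)
  (Hvf : forall i, (i < K)%nat -> vf_continuous (X i))
  (Hns : forall i, (i < K)%nat -> nonsingular (X i))
  (H1 : forall i, (i < K)%nat -> local_semiflow_open (X i))
  (H2 : forall i j, (i < K)%nat -> (j < K)%nat -> Rabs (X i 0) = Rabs (X j 0))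
  (H3 : exists i, ((i < K)%nat /\ X i 0 > 0) /\
          forall j, (j < K)%nat -> X j 0 > 0 -> j = i) :
  star_semiflow K X.
Proof.
  destruct H3 as [i0 [[Hi0 HX0] Hunique]].
  split.
  - intros [k x] [Hk Hx]; simpl in *.
    destruct (Req_dec x 0) as [->|Hx0].
    + destruct (star_solution_from_vertex K X i0 Hi0 (Hvf i0 Hi0) (Hns i0 Hi0) HX0)
        as [g [T [Hg Hg0]]].
      exists g, T. split; [exact Hg|]. rewrite Hg0. now right.
    + destruct (star_solution_from_interior K X k x Hk (H1 k Hk) ltac:(lra))
        as [g [T [Hg Hg0]]].
      exists g, T. split; [exact Hg|]. rewrite Hg0. now left.
  - apply star_solutions_eq; [exact Hns|exact Hvf|].
    intros i j Hi Hj Hpi Hpj. now rewrite (Hunique i Hi Hpi), (Hunique j Hj Hpj).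
Qed.
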